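(* Let $G$ be a simple graph on $[n]$ and let $G^*$ be its associated directed graph. Then $G$ is closed with respect to the given labeling if and only if for any two vertices $i\neq j$ of $G^*$, all paths of shortest length from $i$ to $j$ are directed.
   Context: $G$ is closed with respect to the given labeling if for all distinct edges $\{i,j\}$ and $\{k,l\}$ of $G$ with $i<j$ and $k<l$ one has $\{j,l\}\in E(G)$ whenever $i=k$, and $\{i,k\}\in E(G)$ whenever $j=l$. The associated directed graph $G^*$ has vertex set $[n]$ and an arrow $(i,j)$ whenever $\{i,j\}\in E(G)$ and $i<j$. A path from $v$ to $w$ is a sequence of vertices $v=v_0,v_1,\ldots,v_l=w$ such that each $\{v_k,v_{k+1}\}$ is an edge of the underlying graph; in $G^*$ such a path is called directed if either $(v_k,v_{k+1})$ is an arrow for all $k$, or $(v_{k+1},v_k)$ is an arrow for all $k$. *)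

From mathcomp Require Import all_boot.
Set Implicit Arguments. Unset Strict Implicit. Unset Printing Implicit Defensive.

(* A simple graph on [n] is represented on the vertex type 'I_n (vertices
   0,...,n-1, with the natural order playing the role of the labeling) by a
   symmetric irreflexive adjacency relation G. *)
Definition simple_graph (n : nat) (G : rel 'I_n) : Prop :=
  symmetric G /\ irreflexive G.

Definition closed_graph (n : nat) (G : rel 'I_n) : Prop :=
  forall i j k l : 'I_n, G i j -> G k l -> i < j -> k < l ->
    (i, j) <> (k, l) ->
    (i = k -> G j l) /\ (j = l -> G i k).

(* A path from v to w: the vertex sequence v :: p with consecutive vertices
   adjacent in G and last vertex w; its length is size p. *)
Definition is_path (n : nat) (G : rel 'I_n) (v w : 'I_n) (p : seq 'I_n) : Prop :=
  path G v p /\ last v p = w.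

Definition is_shortest_path (n : nat) (G : rel 'I_n) (v w : 'I_n) (p : seq 'I_n)
  : Prop :=
  is_path G v w p /\ forall q, is_path G v w q -> size p <= size q.

(* Directed in G^*: every step is an arrow (v_k, v_{k+1}), i.e. an edge with
   v_k < v_{k+1}, or every step is a reversed arrow (v_{k+1}, v_k). *)
Definition directed_path (n : nat) (G : rel 'I_n) (v : 'I_n) (p : seq 'I_n) : Prop :=
  path (fun a b => G a b && (a < b)) v p \/ path (fun a b => G a b && (b < a)) v p.

From mathcomp Require Import all_boot.
Set Implicit Arguments. Unset Strict Implicit. Unset Printing Implicit Defensive.

(* A path turns at x when both neighbours of x lie on the same side of x.
   Closedness says exactly that every turn v - x - y has the chord {v, y}.
   Chords shortcut turning paths, so shortest paths never turn, i.e. they are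
   directed; conversely a turn v - x - y without chord is a shortest path
   of length two that is not directed. *)

Definition turn_chords (n : nat) (G : rel 'I_n) : Prop :=
  forall v x y : 'I_n, G v x -> G x y -> v != y -> (x < v) = (x < y) -> G v y.

Section ClosedTurns.

Variables (n : nat) (G : rel 'I_n).
Hypotheses (Gsym : symmetric G) (Girr : irreflexive G).

Lemma adj_neq (v x : 'I_n) : G v x -> v != x.
Proof. by apply: contraTneq => ->; rewrite Girr. Qed.

Lemma closed_turn_chords : closed_graph G -> turn_chords G.
Proof.
move=> Gc v x y Gvx Gxy nvy.
have /negbTE nxv : x != v by rewrite eq_sym adj_neq.
have /negbTE nxy : x != y by rewrite adj_neq.
case: (ltngtP x v) => [xv | vx | /val_inj/eqP]; last by rewrite nxv.
- move=> /esym xy; have Gxv : G x v by rewrite Gsym.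
  have neq : (x, v) <> (x, y) by case=> vy; rewrite vy eqxx in nvy.
  by have [/(_ erefl)] := Gc x v x y Gxv Gxy xv xy neq.
- case: (ltngtP x y) => [// | yx _ | /val_inj/eqP]; last by rewrite nxy.
  have Gyx : G y x by rewrite Gsym.
  have neq : (v, x) <> (y, x) by case=> vy; rewrite vy eqxx in nvy.
  by have [_ /(_ erefl)] := Gc v x y x Gvx Gyx vx yx neq.
Qed.

Lemma turn_chords_closed : turn_chords G -> closed_graph G.
Proof.
move=> Gt i j k l Gij Gkl ij kl neq; split=> [ik | jl].
- rewrite -ik in Gkl kl neq; apply: (Gt j i l) => //; first by rewrite Gsym.
  + by apply: contra_not_neq neq => ->.
  + by rewrite ij kl.
- rewrite jl in Gij ij neq; apply: (Gt i l k) => //; first by rewrite Gsym.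
  + by apply: contra_not_neq neq => ->.
  + by rewrite ltnNge (ltnW ij) ltnNge (ltnW kl).
Qed.

Lemma directed_path1 (v x : 'I_n) : G v x -> directed_path G v [:: x].
Proof.
move=> Gvx; case: (ltngtP v x) => [vx | xv | /val_inj vx].
- by left; rewrite /= Gvx vx.
- by right; rewrite /= Gvx xv.
- by move: Gvx; rewrite vx Girr.
Qed.

Lemma directed_path_cons (v x y : 'I_n) (p : seq 'I_n) :
  G v x -> (x < v) != (x < y) -> directed_path G x (y :: p) ->
  directed_path G v [:: x, y & p].
Proof.
move=> Gvx turn [/= /andP[/andP[Gxy xy] Pp] | /= /andP[/andP[Gxy yx] Pp]].
- left; rewrite /= Gvx Gxy xy Pp !andbT /=.
  have := adj_neq Gvx; rewrite neq_ltn => /orP[//| xv].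
  by move: turn; rewrite xv xy.
- right; rewrite /= Gvx Gxy yx Pp !andbT /=.
  have := adj_neq Gvx; rewrite neq_ltn => /orP[vx | //].
  by move: turn; rewrite ltnNge (ltnW vx) ltnNge (ltnW yx).
Qed.

Hypothesis Gt : turn_chords G.

Lemma path_directed_or_shortcut (v : 'I_n) (p : seq 'I_n) : path G v p ->
  directed_path G v p \/
  exists2 q, path G v q & last v q = last v p /\ size q < size p.
Proof.
elim: p v => [|x p IHp] v /=; first by left; left.
move=> /andP[Gvx Pp]; case: (IHp x Pp) => [Dp | [q Pq [Lq Sq]]]; last first.
  by right; exists (x :: q); rewrite /= ?Gvx ?Lq.
case: p Pp Dp {IHp} => [_ _ | y p /= /andP[Gxy Pp] Dp].
  by left; apply: directed_path1.
have [turn | turn] := eqVneq (x < v) (x < y); last first.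
  by left; apply: directed_path_cons.
right; have [vy | nvy] := eqVneq v y.
  by subst y; exists p; rewrite // ltnS leqW.
by exists (y :: p); rewrite /= ?(Gt Gvx Gxy nvy turn) ?Pp.
Qed.

Lemma shortest_path_directed (v w : 'I_n) (p : seq 'I_n) :
  is_shortest_path G v w p -> directed_path G v p.
Proof.
move=> [[Pp Lp] Hmin]; case: (path_directed_or_shortcut Pp) => // [[q Pq [Lq]]].
by rewrite ltnNge Hmin //; split; rewrite ?Lq.
Qed.

End ClosedTurns.

Lemma chordless_turn_shortest (n : nat) (G : rel 'I_n) (v x y : 'I_n) :
  G v x -> G x y -> v != y -> ~~ G v y -> is_shortest_path G v y [:: x; y].
Proof.
move=> Gvx Gxy nvy nGvy; split; first by split; rewrite //= Gvx Gxy.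
case=> [|z [|z' q]] [] //=; first by move=> _ vy; rewrite vy eqxx in nvy.
by move=> /andP[Gvz _] zy; rewrite -zy Gvz in nGvy.
Qed.

Lemma shortest_directed_turn_chords (n : nat) (G : rel 'I_n) :
  (forall (i j : 'I_n) (p : seq 'I_n), i != j ->
     is_shortest_path G i j p -> directed_path G i p) ->
  turn_chords G.
Proof.
move=> Hdir v x y Gvx Gxy nvy turn; apply/negPn/negP => nGvy.
have [] := Hdir v y _ nvy (chordless_turn_shortest Gvx Gxy nvy nGvy) => /=.
- by move=> /and3P[/andP[_ vx] /andP[_ xy] _]; rewrite ltnNge (ltnW vx) xy in turn.
- by move=> /and3P[/andP[_ xv] /andP[_ yx] _]; rewrite xv ltnNge (ltnW yx) in turn.
Qed.

Theorem proposition1p4 (n : nat) (G : rel 'I_n) :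
  simple_graph G ->
  (closed_graph G <->
   forall (i j : 'I_n) (p : seq 'I_n), i != j ->
     is_shortest_path G i j p -> directed_path G i p).
Proof.
move=> [Gsym Girr]; split=> [Gc i j p _ | Hdir].
- exact/(shortest_path_directed Girr)/(closed_turn_chords Gsym Girr).
- exact/(turn_chords_closed Gsym)/shortest_directed_turn_chords.
Qed.
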